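(* Let $\mathcal{R}$ be a cell space whose stabiliser $G_0$ is finite, and let $(F_i)_{i\in I}$ be a net, indexed by a directed set $(I,\leq)$, of nonempty finite subsets of $M$. Then $(F_i)_{i\in I}$ is a right Følner net in $\mathcal{R}$ if and only if for every finite subset $E\subseteq G/G_0$ we have $\lim_{i\in I}\frac{|\partial_E F_i|}{|F_i|}=0$.
   Context: A cell space $\mathcal{R}$ consists of a group $G$ acting transitively on the left on a nonempty set $M$ via $\triangleright$, a point $m_0\in M$ and a family $(g_{m_0,m})_{m\in M}$ in $G$ with $g_{m_0,m}\triangleright m_0=m$. $G_0$ is the stabiliser of $m_0$, $G/G_0$ the set of left cosets. The right semi-action $\triangleleft\colon M\times G/G_0\to M$ is $m\triangleleft gG_0=g_{m_0,m}g\triangleright m_0$; for $E\subseteq G/G_0$, $m\triangleleft E=\{m\triangleleft e:e\in E\}$, and $(\cdot\triangleleft\mathfrak{g})^{-1}(A)=\{m\in M: m\triangleleft\mathfrak{g}\in A\}$. For $A\subseteq M$ and $E\subseteq G/G_0$: $A^{-E}=\{m\in M: m\triangleleft E\subseteq A\}$, $A^{+E}=\{m\in M:(m\triangleleft E)\cap A\neq\emptyset\}$, $\partial_E A=A^{+E}\setminus A^{-E}$. A right Følner net in $\mathcal{R}$ is a net $(F_i)_{i\in I}$ of nonempty finite subsets of $M$ such that for every $\mathfrak{g}\in G/G_0$, $\lim_{i\in I}\frac{|F_i\setminus(\cdot\triangleleft\mathfrak{g})^{-1}(F_i)|}{|F_i|}=0$. *)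

From mathcomp Require Import all_boot.
From mathcomp Require Import finmap boolp classical_sets cardinality.
From Stdlib Require Import Reals.

Set Implicit Arguments.
Unset Strict Implicit.
Unset Printing Implicit Defensive.

Local Open Scope classical_set_scope.
Local Open Scope fset_scope.

Record cell_space := CellSpace {
  cs_G : Type;
  cs_mul : cs_G -> cs_G -> cs_G;
  cs_one : cs_G;
  cs_inv : cs_G -> cs_G;
  cs_mulA : forall x y z, cs_mul x (cs_mul y z) = cs_mul (cs_mul x y) z;
  cs_mul1g : forall x, cs_mul cs_one x = x;
  cs_mulVg : forall x, cs_mul (cs_inv x) x = cs_one;
  cs_M : choiceType;
  cs_act : cs_G -> cs_M -> cs_M;
  cs_act1 : forall m, cs_act cs_one m = m;
  cs_actM : forall g h m, cs_act (cs_mul g h) m = cs_act g (cs_act h m);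
  cs_transitive : forall m m', exists g, cs_act g m = m';
  cs_m0 : cs_M;
  cs_gm : cs_M -> cs_G;
  cs_gmP : forall m, cs_act (cs_gm m) cs_m0 = m
}.

Section CellSpaceDefs.
Variable R : cell_space.
Local Notation G := (cs_G R).
Local Notation M := (cs_M R).

Definition stabiliser : set G := [set g | cs_act g (cs_m0 R) = cs_m0 R].

Definition lcoset (g : G) : set G :=
  [set x | exists2 h, stabiliser h & x = cs_mul g h].

Definition cosets : Type := {C : set G | exists g, C = lcoset g}.

Definition coset_rep (C : cosets) : G := projT1 (cid (proj2_sig C)).

(* Right semi-action m <| g G_0 = g_{m0,m} g |> m0. *)
Definition semi_act (m : M) (C : cosets) : M :=
  cs_act (cs_mul (cs_gm m) (coset_rep C)) (cs_m0 R).

Definition semi_preimage (C : cosets) (A : set M) : set M :=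
  [set m | A (semi_act m C)].

Definition erosion (A : set M) (E : set cosets) : set M :=
  [set m | forall e, E e -> A (semi_act m e)].
Definition dilation (A : set M) (E : set cosets) : set M :=
  [set m | exists2 e, E e & A (semi_act m e)].
Definition boundary (E : set cosets) (A : set M) : set M :=
  dilation A E `\` erosion A E.

Definition scard (A : set M) : nat := #|` fset_set A|.

End CellSpaceDefs.

Definition net_lim0 (I : Type) (le : I -> I -> Prop) (x : I -> R) : Prop :=
  forall eps : R, (0 < eps)%R -> exists i0, forall i, le i0 i -> (Rabs (x i) < eps)%R.

Definition directed_set (I : Type) (le : I -> I -> Prop) : Prop :=
  inhabited I /\ (forall i, le i i) /\
  (forall i j k, le i j -> le j k -> le i k) /\
  (forall i j, exists k, le i k /\ le j k).

Definition right_folner_net (R : cell_space) (I : Type) (le : I -> I -> Prop)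
  (F : I -> set (cs_M R)) : Prop :=
  (forall i, finite_set (F i) /\ F i !=set0) /\
  forall g : cosets R,
    net_lim0 le (fun i => (INR (scard (F i `\` semi_preimage g (F i)))
                           / INR (scard (F i)))%R).

From mathcomp Require Import all_boot.
From mathcomp Require Import finmap boolp classical_sets cardinality.
From Stdlib Require Import Reals Lra.
From Stdlib Require List.

(* If [m] is in the [E]-boundary of [F], some [m <| e] is in [F] while some [m <| e'] is
   not. Then [x := m <| e] is a point of [F] pushed out of [F] by a coset determined by
   [e], [e'] and an element of [G_0], and [m] is recovered from [x] by a map depending only
   on [e] and that element. As [E] and [G_0] are finite, [|boundary E F|] is bounded by a
   fixed finite sum of the right Folner defects [|F \ (. <| c)^-1(F)|]. Conversely the
   defect of [g G_0] lies in the boundary for [E = {G_0, g G_0}], since [m <| G_0 = m]. *)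

Local Open Scope classical_set_scope.

Section NetLimits.
Context {I : Type} {le : I -> I -> Prop}.

Lemma net_lim0_le {x y : I -> R} :
  (forall i, 0 <= x i <= y i)%R -> net_lim0 le y -> net_lim0 le x.
Proof.
move=> xy y0 eps eps_gt0; have [i0 Hi0] := y0 eps eps_gt0.
exists i0 => i /Hi0 y_lt; have [x_ge0 x_le_y] := xy i.
rewrite Rabs_pos_eq //; move: (Rle_abs (y i)); lra.
Qed.

Hypothesis le_directed : directed_set le.

Lemma net_lim0_add (x y : I -> R) :
  net_lim0 le x -> net_lim0 le y -> net_lim0 le (fun i => x i + y i)%R.
Proof.
move=> x0 y0 eps eps_gt0; have [_ [_ [le_trans le_join]]] := le_directed.
have [i1 Hi1] := x0 (eps / 2)%R ltac:(lra).
have [i2 Hi2] := y0 (eps / 2)%R ltac:(lra).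
have [i0 [le_i1 le_i2]] := le_join i1 i2.
exists i0 => i le_i0.
have := Hi1 i (le_trans _ _ _ le_i1 le_i0); have := Hi2 i (le_trans _ _ _ le_i2 le_i0).
have := Rabs_triang (x i) (y i); lra.
Qed.

Lemma net_lim0_ratio_sum {X : Type} {l : seq X} {a : X -> I -> nat} {c : I -> R} :
  (forall k, List.In k l -> net_lim0 le (fun i => INR (a k i) / c i)%R) ->
  net_lim0 le (fun i => INR (\sum_(k <- l) a k i) / c i)%R.
Proof.
elim: l => [|k l IHl] a_lim0.
  have [[i0] _] := le_directed; move=> eps eps_gt0; exists i0 => i _.
  by rewrite big_nil Rdiv_0_l Rabs_R0.
under [fun i => _]funext => i do rewrite big_cons plus_INR Rdiv_plus_distr.
apply: net_lim0_add; first by apply: a_lim0; left.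
by apply: IHl => k' lk'; apply: a_lim0; right.
Qed.

End NetLimits.

Lemma ratio_le (a b c : nat) : (a <= b)%N -> (INR a / INR c <= INR b / INR c)%R.
Proof.
move=> /leP le_ab; apply: Rmult_le_compat_r; last exact: le_INR.
case: c => [|c]; first by rewrite Rinv_0; lra.
exact/Rlt_le/Rinv_0_lt_compat/lt_0_INR/Nat.lt_0_succ.
Qed.

Lemma ratio_ge0 (a c : nat) : (0 <= INR a / INR c)%R.
Proof. by rewrite -(Rdiv_0_l (INR c)) -INR_0; apply: ratio_le. Qed.

Lemma mem_InP (T : eqType) (x : T) (s : seq T) : reflect (List.In x s) (x \in s).
Proof.
elim: s => [|y s IHs] /=; first by constructor.
rewrite in_cons; apply: (iffP orP) => [[/eqP->|/IHs]|[->|/IHs]]; by auto.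
Qed.

Lemma finite_set_seq (X : Type) (K : set X) :
  finite_set K -> exists l : seq X, K = [set k | List.In k l].
Proof.
move=> /(@finite_fsetP {classic X}) [L ->]; exists (L : seq {classic X}).
by apply/seteqP; split=> x /= /(@mem_InP {classic X}).
Qed.

Lemma set_In_cons {X : Type} (k : X) (l : seq X) :
  [set k' | List.In k' (k :: l)] = k |` [set k' | List.In k' l].
Proof. by apply/seteqP; split=> k' /= [->|]; auto. Qed.

Lemma finite_set_In {X : Type} (l : seq X) : finite_set [set k | List.In k l].
Proof.
elim: l => [|k l IHl]; first by rewrite (_ : [set _ | _] = set0) //; apply/seteqP.
by rewrite set_In_cons finite_setU; split; [exact: finite_set1|].
Qed.

Section FiniteSubsets.
Context {T : choiceType}.

Lemma card_fset_set_le {A B : set T} :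
  A `<=` B -> finite_set B -> (#|` fset_set A| <= #|` fset_set B|)%N.
Proof.
move=> AB fB; have fA := sub_finite_set AB fB.
by apply: fsubset_leq_card; rewrite -fset_set_sub.
Qed.

Lemma card_fset_set_image_le (U : choiceType) (f : T -> U) (A : set T) :
  finite_set A -> (#|` fset_set (f @` A)| <= #|` fset_set A|)%N.
Proof. by move=> fA; rewrite fset_set_image //; exact: leq_imfset_card. Qed.

Lemma card_fset_set_bigcup_le {X : Type} (l : seq X) (P : X -> set T) :
  (forall k, List.In k l -> finite_set (P k)) ->
  (#|` fset_set (\bigcup_(k in [set k | List.In k l]) P k)|
     <= \sum_(k <- l) #|` fset_set (P k)|)%N.
Proof.
elim: l => [|k l IHl] fP.
  rewrite big_nil (_ : \bigcup_(_ in _) _ = set0) ?fset_set0 //.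
  by apply/seteqP; split=> x // [].
have fPk : finite_set (P k) by apply: fP; left.
have fP' k' : List.In k' l -> finite_set (P k') by move=> lk'; apply: fP; right.
rewrite set_In_cons bigcup_setU1 big_cons fset_setU //;
  last exact: bigcup_finite (finite_set_In l) fP'.
apply: leq_trans (leq_card_fsetU _ _) _.
by rewrite leq_add2l; apply: IHl.
Qed.

End FiniteSubsets.

Section CellSpace.
Context {R : cell_space}.
Local Notation G := (cs_G R).
Local Notation M := (cs_M R).
Local Notation m0 := (cs_m0 R).

Lemma cs_mulgV (x : G) : cs_mul x (cs_inv x) = cs_one R.
Proof.
rewrite -[cs_mul x _]cs_mul1g -(cs_mulVg (cs_inv x)) -cs_mulA.
by rewrite (cs_mulA (cs_inv x)) cs_mulVg cs_mul1g.
Qed.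

Lemma cs_mulg1 (x : G) : cs_mul x (cs_one R) = x.
Proof. by rewrite -(cs_mulVg x) cs_mulA cs_mulgV cs_mul1g. Qed.

Definition coset_of (g : G) : cosets R := exist _ (lcoset g) (ex_intro _ g erefl).

Lemma semi_act_coset_of (m : M) (g : G) :
  semi_act m (coset_of g) = cs_act (cs_mul (cs_gm m) g) m0.
Proof.
rewrite /semi_act /coset_rep; case: cid => r /= gG0_rG0.
have : lcoset g r by rewrite gG0_rG0; exists (cs_one R); [exact: cs_act1 | rewrite cs_mulg1].
by case=> h G0h ->; rewrite cs_mulA cs_actM G0h.
Qed.

Lemma semi_act_coset_of1 (m : M) : semi_act m (coset_of (cs_one R)) = m.
Proof. by rewrite semi_act_coset_of cs_mulg1 cs_gmP. Qed.

Lemma defect_sub_boundary (g : cosets R) (F : set M) :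
  F `\` semi_preimage g F `<=` boundary [set coset_of (cs_one R); g] F.
Proof.
move=> m [Fm Fmg]; split.
  by exists (coset_of (cs_one R)); [left | rewrite semi_act_coset_of1].
by move=> FE; apply: Fmg; apply: FE; right.
Qed.

(* If [m <| e] lies in [F] and [m <| e'] does not, put [x := m <| e] and let [s] be the
   stabiliser element with [g_{m0,x} s = g_{m0,m} g_e]. For [k = (e, e', s)] we get
   [m = x <| boundary_shift k G_0] and [m <| e' = x <| boundary_coset k]. *)
Definition boundary_shift (k : cosets R * cosets R * G) : G :=
  cs_mul k.2 (cs_inv (coset_rep k.1.1)).

Definition boundary_coset (k : cosets R * cosets R * G) : cosets R :=
  coset_of (cs_mul (boundary_shift k) (coset_rep k.1.2)).

Lemma boundary_sub_bigcup (E : set (cosets R)) (F : set M) :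
  boundary E F `<=` \bigcup_(k in E `*` E `*` @stabiliser R)
    [set semi_act x (coset_of (boundary_shift k))
       | x in F `\` semi_preimage (boundary_coset k) F].
Proof.
move=> m [[e Ee Fme] not_erosion].
have [e' Ee' Fme'] : exists2 e', E e' & ~ F (semi_act m e').
  apply: contrapT => all_in; apply: not_erosion => e'' Ee''.
  by apply: contrapT => Fme''; apply: all_in; exists e''.
set x := semi_act m e.
have [s G0s gx_s] : exists2 s, stabiliser s & cs_mul (cs_gm x) s = cs_mul (cs_gm m) (coset_rep e).
  exists (cs_mul (cs_inv (cs_gm x)) (cs_mul (cs_gm m) (coset_rep e))).
    rewrite /stabiliser /= cs_actM -[X in cs_act _ X]/x -{2}(cs_gmP x) -cs_actM.
    by rewrite cs_mulVg cs_act1.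
  by rewrite cs_mulA cs_mulgV cs_mul1g.
exists (e, e', s) => //; exists x.
  split=> //; rewrite /semi_preimage /= semi_act_coset_of /boundary_shift /=.
  by rewrite !(cs_mulA (cs_gm x)) gx_s -(cs_mulA (cs_gm m)) cs_mulgV cs_mulg1.
rewrite semi_act_coset_of /boundary_shift /= cs_mulA gx_s -cs_mulA cs_mulgV cs_mulg1.
exact: cs_gmP.
Qed.

Hypothesis stabiliser_finite : finite_set (@stabiliser R).

Lemma finite_boundary {E : set (cosets R)} {F : set M} :
  finite_set E -> finite_set F -> finite_set (boundary E F).
Proof.
move=> fE fF; apply: sub_finite_set (boundary_sub_bigcup E F) _.
apply: bigcup_finite; first exact: finite_setX (finite_setX fE fE) stabiliser_finite.
by move=> k _; apply/finite_image/finite_setD.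
Qed.

Lemma card_boundary_le {E : set (cosets R)} : finite_set E ->
  exists l : seq (cosets R * cosets R * G), forall F : set M, finite_set F ->
    (scard (boundary E F) <= \sum_(k <- l) scard (F `\` semi_preimage (boundary_coset k) F))%N.
Proof.
move=> fE; have [l El] : exists l, E `*` E `*` @stabiliser R = [set k | List.In k l].
  exact/finite_set_seq/finite_setX/stabiliser_finite/finite_setX.
exists l => F fF; have fD k := finite_setD (semi_preimage (boundary_coset k) F) fF.
apply: leq_trans (card_fset_set_le (boundary_sub_bigcup E F) _) _.
  by rewrite El; apply: bigcup_finite (finite_set_In l) _ => k _; exact: finite_image.
rewrite El; apply: leq_trans (card_fset_set_bigcup_le _ _ (fun k _ => finite_image _ (fD k))) _.
by apply: leq_sum => k _; exact: card_fset_set_image_le (fD k).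
Qed.

End CellSpace.

Theorem theorem1 (R : cell_space) (HG0 : finite_set (@stabiliser R))
  (I : Type) (le : I -> I -> Prop) (HI : directed_set le)
  (F : I -> set (cs_M R))
  (HF : forall i, finite_set (F i) /\ F i !=set0) :
  right_folner_net le F <->
  (forall E : set (cosets R), finite_set E ->
     net_lim0 le (fun i => (INR (scard (boundary E (F i))) / INR (scard (F i)))%R)).
Proof.
split=> [[_ folner] E fE | boundary_lim0].
  have [l card_le] := card_boundary_le HG0 fE.
  apply: net_lim0_le (net_lim0_ratio_sum HI (fun k _ => folner (boundary_coset k))) => i.
  by split; [exact: ratio_ge0 | exact/ratio_le/card_le/(HF i).1].
split=> // g; pose E := [set coset_of (cs_one R); g].
have fE : finite_set E := finite_set2 _ _.
apply: net_lim0_le (boundary_lim0 E fE) => i.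
split; first exact: ratio_ge0.
apply/ratio_le/card_fset_set_le; first exact: defect_sub_boundary.
exact: (finite_boundary HG0 fE (HF i).1).
Qed.
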